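(* Let $\alpha\in(0,1]$, let $k\in\{0,1,\dots,m-1\}$, and let $\vec r=(r_1,\dots,r_{k+1},0,\dots,0)\in\mathbb R_{\ge0}^m$ with $\sum_{i=1}^{k+1}r_i=1$. Let $\mathcal E=(N,A,\vec\sigma)$ be an election with $m$ alternatives whose profile is moderate-up-to-$k$. Let $a^*$ be any alternative selected by the Positional Scoring Matching rule $\mathrm{PSM}_{\vec r}$ on $\vec\sigma$. Then $$\mathsf{dist}_\alpha(a^*,\mathcal E)\le 2+\max\left(\alpha,\ \max_{j\in[k+1]}\Big(\sum_{i\in[k+1],\,i\ne j} r_i\max(1,\alpha^{j-i})\Big)-r_j\right).$$
   Context: An election $\mathcal E=(N,A,\vec\sigma)$ has $n$ agents $N$, $m$ alternatives $A$, and $\sigma_i=(\pi_i,\Join_i)$ with $\pi_i:[m]\to A$ a bijection ($\pi_i(1)$ most preferred) and $\Join_i:[m-1]\to\{\succ,\succ\!\!\succ\}$. Write $\mathrm{rank}_i(a)=\pi_i^{-1}(a)$ and $a\succ_i c$ if $\mathrm{rank}_i(a)<\mathrm{rank}_i(c)$. A metric $d$ on $N\cup A$ is nonnegative and symmetric, satisfies the triangle inequality, and has $d(x,x)=0$. The profile $\vec\sigma$ is $\alpha$-consistent with $d$ (mandatory elicitation) if for all $i$ and $j\in[m-1]$: - $\Join_i(j)=\,\succ$ implies $d(i,\pi_i(j+1))\ge d(i,\pi_i(j))>\alpha d(i,\pi_i(j+1))$; - $\Join_i(j)=\,\succ\!\!\succ$ implies $d(i,\pi_i(j))\le\alpha d(i,\pi_i(j+1))$.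 $\mathsf{dist}_\alpha(a,\mathcal E)=\sup_d \sum_i d(i,a)/\min_{b}\sum_i d(i,b)$, with the supremum over $\alpha$-consistent $d$. A preference $(\pi,\Join)$ is moderate-up-to-$k$ if $\Join(k+1)=\,\succ\!\!\succ$ and $\Join(i)=\,\succ$ for all $i\in[k]$. A preference with no $\succ\!\!\succ$ is moderate-up-to-$(m-1)$. A profile is moderate-up-to-$k$ if all agents' preferences are. For $\vec p\in\Delta(N)$, $\vec q\in\Delta(A)$ and $a\in A$, the $(\vec p,\vec q)$-domination graph of $a$ is the bipartite graph on $N\cup A$ with an edge $(i,c)$ iff $a\succ_i c$ or $c=a$; agent $i$ has weight $p(i)$ and alternative $c$ has weight $q(c)$. It admits a fractional perfect matching if there are nonnegative edge weights $w$ with $\sum_{c:(i,c)\text{ edge}}w(i,c)=p(i)$ for every $i$ and $\sum_{i:(i,c)\text{ edge}}w(i,c)=q(c)$ for every $c$. The rule $\mathrm{PSM}_{\vec r}$ sets $p(i)=1/n$ and $q(c)=\frac1n\sum_{i\in N}r_{\mathrm{rank}_i(c)}$. It selects an alternative whose $(\vec p,\vec q)$-domination graph admits a fractional perfect matching; such an alternative always exists. *)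

From mathcomp Require Import all_boot all_order all_algebra all_fingroup.
Set Implicit Arguments. Unset Strict Implicit. Unset Printing Implicit Defensive.
Import Order.TTheory GRing.Theory Num.Theory.
Local Open Scope ring_scope.

(* Conventions (0-based): agents are 'I_n, alternatives are 'I_m,
   positions in a ranking are 'I_m (position 0 = most preferred).
   A profile is given by
     pi : 'I_n -> {perm 'I_m}     (pi i j = alternative at position j of agent i)
     J  : 'I_n -> nat -> bool     (J i j = true  iff  Join_i(j+1) = ">>",
                                   J i j = false iff  Join_i(j+1) = ">",
                                   only meaningful for j.+1 < m). *)

Section Election.
Variables (R : realFieldType) (n m : nat).

Definition pt := ('I_n + 'I_m)%type.

Definition rank (pi : 'I_n -> {perm 'I_m}) (i : 'I_n) (a : 'I_m) : 'I_m :=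
  ((pi i)^-1)%g a.

Definition is_metric (d : pt -> pt -> R) : Prop :=
  [/\ (forall x y, 0 <= d x y),
      (forall x y, d x y = d y x),
      (forall x y z, d x z <= d x y + d y z) &
      (forall x, d x x = 0)].

Definition consistent (alpha : R) (pi : 'I_n -> {perm 'I_m})
    (J : 'I_n -> nat -> bool) (d : pt -> pt -> R) : Prop :=
  forall (i : 'I_n) (j j1 : 'I_m), j1 = j.+1 :> nat ->
    let dj  := d (inl i) (inr (pi i j)) in
    let dj1 := d (inl i) (inr (pi i j1)) in
    (J i j = false -> dj <= dj1 /\ alpha * dj1 < dj) /\
    (J i j = true -> dj <= alpha * dj1).

Definition cost (d : pt -> pt -> R) (a : 'I_m) : R :=
  \sum_(i < n) d (inl i) (inr a).

(* dist_alpha(a, E) <= c, i.e. sup over alpha-consistent metrics d of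
   cost(a)/min_b cost(b) is at most c (stated multiplicatively). *)
Definition distortion_le (alpha : R) (pi : 'I_n -> {perm 'I_m})
    (J : 'I_n -> nat -> bool) (a : 'I_m) (c : R) : Prop :=
  forall d : pt -> pt -> R, is_metric d -> consistent alpha pi J d ->
    forall b : 'I_m, cost d a <= c * cost d b.

(* Moderate-up-to-k (0-based: Join(j+1) = ">" for j < k, Join(k+1) = ">>"
   when k+1 <= m-1; for k = m-1 this means there is no ">>"). *)
Definition moderate_pref (k : nat) (Ji : nat -> bool) : Prop :=
  (forall j, (j < k)%N -> Ji j = false) /\ ((k.+1 < m)%N -> Ji k = true).

Definition moderate_profile (k : nat) (J : 'I_n -> nat -> bool) : Prop :=
  forall i, moderate_pref k (J i).

Definition dom_edge (pi : 'I_n -> {perm 'I_m}) (a : 'I_m) (i : 'I_n) (c : 'I_m)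
  : bool := (rank pi i a < rank pi i c)%N || (c == a).

Definition admits_frac_pm (pi : 'I_n -> {perm 'I_m}) (a : 'I_m)
    (p : 'I_n -> R) (q : 'I_m -> R) : Prop :=
  exists w : 'I_n -> 'I_m -> R,
    [/\ (forall i c, 0 <= w i c),
        (forall i, \sum_(c < m | dom_edge pi a i c) w i c = p i) &
        (forall c, \sum_(i < n | dom_edge pi a i c) w i c = q c)].

Definition psm_p (i : 'I_n) : R := n%:R^-1.
Definition psm_q (pi : 'I_n -> {perm 'I_m}) (r : 'I_m -> R) (c : 'I_m) : R :=
  n%:R^-1 * \sum_(i < n) r (rank pi i c).

Definition psm_selects (pi : 'I_n -> {perm 'I_m}) (r : 'I_m -> R) (a : 'I_m)
  : Prop := admits_frac_pm pi a psm_p (psm_q pi r).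

Definition lemma3_bound (alpha : R) (k : nat) (r : 'I_m -> R) : R :=
  2 + \big[Num.max/alpha]_(j < m | (j <= k)%N)
        ((\sum_(i < m | ((i <= k)%N && (i != j)))
            r i * Num.max 1 (alpha ^ (j%:Z - i%:Z))) - r j).

End Election.

From mathcomp Require Import all_boot all_order all_algebra all_fingroup.
From mathcomp Require Import zify ring lra.
Import Order.TTheory GRing.Theory Num.Theory.
Local Open Scope ring_scope.

(* Fix a consistent metric d, the selected alternative a and any alternative b,
   and let agent i rank b at position t. Along i's ranking distances are
   nondecreasing and a ">" step shrinks them by at most a factor alpha, so
   every alternative at a position j <= k is within max(1, alpha^(t-j)) d(i,b)
   of i when t <= k, and within alpha d(i,b) when t > k (through the ">>" step
   after position k). By the triangle inequality through i,
   sum_j r_j d(b, pi_i(j)) is then at most (lemma3_bound - 1) d(i,b).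
   On the other hand every edge (i,c) of the domination graph of a has
   d(i,a) <= d(i,c) <= d(i,b) + d(b,c); summing along the fractional perfect
   matching, the weights q(c) recombine these into
   cost(a) <= cost(b) + sum_i sum_j r_j d(b, pi_i(j)). *)

Section ConsistentMetric.
Context {R : realFieldType} {n m : nat} {alpha : R}
  { pi : 'I_n -> {perm 'I_m} } {J : 'I_n -> nat -> bool}
  {d : pt n m -> pt n m -> R}.
Hypotheses (alpha_gt0 : 0 < alpha) (alpha_le1 : alpha <= 1)
  (d_metric : is_metric d) (d_consistent : consistent alpha pi J d).

Definition rank_dist (i : 'I_n) (j : 'I_m) : R := d (inl i) (inr (pi i j)).

Lemma rank_dist_ge0 i j : 0 <= rank_dist i j.
Proof. by case: d_metric => d_ge0 _ _ _; apply: d_ge0. Qed.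

Lemma dist_le_via_agent i (b c : 'I_m) :
  d (inr b) (inr c) <= d (inl i) (inr b) + d (inl i) (inr c).
Proof.
case: d_metric => _ d_sym d_tri _.
by rewrite -[d (inl i) _]d_sym; apply: d_tri.
Qed.

Lemma rank_dist_succ i (j j1 : 'I_m) :
  j1 = j.+1 :> nat -> rank_dist i j <= rank_dist i j1.
Proof.
move=> j1E; have [weak strong] := d_consistent i j j1 j1E.
case: (J i j) weak strong => [_ /(_ erefl) le_alpha | /(_ erefl) [] //].
by apply: le_trans le_alpha _; rewrite ler_piMl ?rank_dist_ge0.
Qed.

Lemma rank_dist_mono i {j j' : 'I_m} :
  (j <= j')%N -> rank_dist i j <= rank_dist i j'.
Proof.
move=> le_jj'; move: (j' - j)%N (subnK le_jj') => l.
elim: l j' {le_jj'} => [|l IHl] j' j'E.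
  by have -> : j' = j by apply: val_inj => /=; lia.
have lt_lm : (l + j < m)%N by have := ltn_ord j'; lia.
apply: le_trans (IHl (Ordinal lt_lm) erefl) _.
by apply: rank_dist_succ => /=; lia.
Qed.

Lemma rank_dist_weak_chain i l (j j' : 'I_m) : j' = (l + j)%N :> nat ->
  (forall h, (j <= h < j')%N -> J i h = false) ->
  alpha ^+ l * rank_dist i j' <= rank_dist i j.
Proof.
elim: l j' => [|l IHl] j' j'E weak.
  by rewrite expr0 mul1r; have -> : j' = j by apply: val_inj => /=; lia.
have lt_lm : (l + j < m)%N by have := ltn_ord j'; lia.
have le_prev : alpha ^+ l * rank_dist i (Ordinal lt_lm) <= rank_dist i j.
  by apply: IHl => // h /= hj; apply: weak; lia.
have [step _] := d_consistent i (Ordinal lt_lm) j' ltac:(simpl; lia).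
have [_ /ltW le_last] := step (weak (l + j)%N ltac:(lia)).
apply: le_trans le_prev; rewrite exprSr -mulrA ler_wpM2l //.
exact: exprn_ge0 (ltW alpha_gt0).
Qed.

Lemma dom_edge_dist_le {a c : 'I_m} {i} :
  dom_edge pi a i c -> d (inl i) (inr a) <= d (inl i) (inr c).
Proof.
case/orP=> [/ltnW le_ac | /eqP -> //].
by have := rank_dist_mono i le_ac; rewrite /rank_dist /rank !permKV.
Qed.

Lemma frac_pm_cost_le (a b : 'I_m) (p : 'I_n -> R) (q : 'I_m -> R) :
  admits_frac_pm pi a p q ->
  \sum_i p i * d (inl i) (inr a) <=
  \sum_i p i * d (inl i) (inr b) + \sum_c q c * d (inr b) (inr c).
Proof.
case=> w [w_ge0 w_p w_q].
have -> : \sum_c q c * d (inr b) (inr c) =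
    \sum_i \sum_(c | dom_edge pi a i c) w i c * d (inr b) (inr c).
  rewrite (exchange_big_dep xpredT) //=.
  by apply: eq_bigr => c _; rewrite -w_q mulr_suml.
rewrite -big_split /=; apply: ler_sum => i _.
rewrite -w_p !mulr_suml -big_split /=; apply: ler_sum => c edge_ic.
rewrite -mulrDr; apply: ler_wpM2l => //.
apply: le_trans (dom_edge_dist_le edge_ic) _.
by case: d_metric => _ _ d_tri _; apply: d_tri.
Qed.

Lemma sum_rank_weights (r : 'I_m -> R) (b : 'I_m) :
  \sum_c (\sum_i r (rank pi i c)) * d (inr b) (inr c) =
  \sum_i \sum_j r j * d (inr b) (inr (pi i j)).
Proof.
under eq_bigr do rewrite mulr_suml.
rewrite exchange_big; apply: eq_bigr => i _ /=.
rewrite (reindex_inj (@perm_inj _ (pi i))) /=.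
by apply: eq_bigr => j _; rewrite /rank permK.
Qed.

Lemma psm_cost_le {r : 'I_m -> R} {a : 'I_m} (b : 'I_m) :
  psm_selects pi r a ->
  cost d a <= cost d b + \sum_i \sum_j r j * d (inr b) (inr (pi i j)).
Proof.
have [n0 _ | n_gt0 /(frac_pm_cost_le _ b)] := posnP n.
  by rewrite /cost !big1 ?addr0 // => -[i lt_in]; exfalso; rewrite n0 in lt_in.
rewrite /psm_p /psm_q; under [X in _ + X]eq_bigr do rewrite -mulrA.
by rewrite -!mulr_sumr sum_rank_weights -mulrDr ler_pM2l ?invr_gt0 ?ltr0n.
Qed.

Section Moderate.
Context {k : nat} {r : 'I_m -> R}.
Hypotheses (k_lt_m : (k < m)%N) (J_moderate : moderate_profile m k J)
  (r_ge0 : forall j, 0 <= r j) (r_gt_k : forall j : 'I_m, (k < j)%N -> r j = 0)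
  (r_sum1 : \sum_(j < m | (j <= k)%N) r j = 1).

Lemma rank_dist_le_max_exp i (j t : 'I_m) : (j <= k)%N ->
  rank_dist i j <= Num.max 1 (alpha ^ (t%:Z - j%:Z)) * rank_dist i t.
Proof.
move=> le_jk; have [le_jt | lt_tj] := leqP j t.
  apply: le_trans (rank_dist_mono i le_jt) _.
  by rewrite ler_peMl ?rank_dist_ge0 // le_max lexx.
have l_gt0 : 0 < alpha ^+ (j - t) by apply: exprn_gt0.
have chain := rank_dist_weak_chain i (j - t) t j ltac:(lia)
  (fun h hh => (J_moderate i).1 h ltac:(lia)).
have -> : (t%:Z - j%:Z = - (j - t)%N%:Z)%R by lia.
rewrite -exprnN; apply: (@le_trans _ _ ((alpha ^+ (j - t))^-1 * rank_dist i t)).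
  by rewrite ler_pdivlMl.
by rewrite ler_wpM2r ?rank_dist_ge0 // le_max lexx orbT.
Qed.

Lemma rank_dist_le_alpha i (j t : 'I_m) : (j <= k < t)%N ->
  rank_dist i j <= alpha * rank_dist i t.
Proof.
case/andP=> le_jk lt_kt.
have lt_k1m : (k.+1 < m)%N by apply: leq_trans (ltn_ord t).
have [_ /(_ ((J_moderate i).2 lt_k1m)) strong] :=
  d_consistent i (Ordinal k_lt_m) (Ordinal lt_k1m) erefl.
apply: le_trans (rank_dist_mono i (j' := Ordinal k_lt_m) le_jk) _.
by apply: le_trans strong _; rewrite ler_wpM2l ?(ltW alpha_gt0) ?rank_dist_mono.
Qed.

Let M := \big[Num.max/alpha]_(j < m | (j <= k)%N)
   ((\sum_(i < m | (i <= k)%N && (i != j))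
       r i * Num.max 1 (alpha ^ (j%:Z - i%:Z))) - r j).

Lemma agent_bound_top i (b : 'I_m) : (rank pi i b <= k)%N ->
  \sum_(j < m | (j <= k)%N) r j * d (inr b) (inr (pi i j)) <=
  (1 + M) * d (inl i) (inr b).
Proof.
set t := rank pi i b => le_tk.
have bE : pi i t = b by rewrite /t /rank permKV.
set D := d (inl i) (inr b); have D_ge0 : 0 <= D by rewrite /D -bE rank_dist_ge0.
set S := \sum_(j < m | (j <= k)%N && (j != t))
  r j * Num.max 1 (alpha ^ (t%:Z - j%:Z)).
have le_SM : S - r t <= M by apply: le_bigmax_cond.
have r_rest : \sum_(j < m | (j <= k)%N && (j != t)) r j = 1 - r t.
  by move: r_sum1; rewrite (bigD1 t) //= => <-; rewrite addrAC subrr add0r.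
case: d_metric => _ _ _ d_refl.
rewrite (bigD1 t) //= bE d_refl mulr0 add0r.
apply: (@le_trans _ _ (\sum_(j < m | (j <= k)%N && (j != t))
    (r j * D + r j * Num.max 1 (alpha ^ (t%:Z - j%:Z)) * D))).
  apply: ler_sum => j /andP [le_jk _]; rewrite -mulrA -mulrDr ler_wpM2l //.
  apply: le_trans (dist_le_via_agent i b _) _; rewrite lerD2l.
  by rewrite /D -bE; apply: rank_dist_le_max_exp.
rewrite big_split /= -!mulr_suml r_rest -/S; nra.
Qed.

Lemma agent_bound_below i (b : 'I_m) : (k < rank pi i b)%N ->
  \sum_(j < m | (j <= k)%N) r j * d (inr b) (inr (pi i j)) <=
  (1 + M) * d (inl i) (inr b).
Proof.
set t := rank pi i b => lt_kt.
have bE : pi i t = b by rewrite /t /rank permKV.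
set D := d (inl i) (inr b); have D_ge0 : 0 <= D by rewrite /D -bE rank_dist_ge0.
apply: (@le_trans _ _ (\sum_(j < m | (j <= k)%N) r j * ((1 + alpha) * D))).
  apply: ler_sum => j le_jk; rewrite ler_wpM2l //.
  apply: le_trans (dist_le_via_agent i b _) _; rewrite mulrDl mul1r lerD2l.
  by rewrite /D -bE; apply: rank_dist_le_alpha; rewrite le_jk.
rewrite -mulr_suml r_sum1 mul1r ler_wpM2r // lerD2l.
exact: bigmax_ge_id.
Qed.

Lemma agent_bound i (b : 'I_m) :
  \sum_j r j * d (inr b) (inr (pi i j)) <=
  (lemma3_bound alpha k r - 1) * d (inl i) (inr b).
Proof.
have -> : lemma3_bound alpha k r - 1 = 1 + M by rewrite /lemma3_bound -/M; ring.
rewrite (bigID (fun j : 'I_m => (j <= k)%N)) /= [X in _ + X]big1 ?addr0.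
  by case: (leqP (rank pi i b) k) => [/agent_bound_top | /agent_bound_below].
by move=> j; rewrite -ltnNge => /r_gt_k ->; rewrite mul0r.
Qed.

End Moderate.
End ConsistentMetric.

Theorem lemma3 (R : realFieldType) (n m : nat) (alpha : R) (k : nat)
    (r : 'I_m -> R) (pi : 'I_n -> {perm 'I_m}) (J : 'I_n -> nat -> bool)
    (astar : 'I_m) :
  0 < alpha -> alpha <= 1 ->
  (k < m)%N ->
  (forall i, 0 <= r i) ->
  (forall i : 'I_m, (k < i)%N -> r i = 0) ->
  \sum_(i < m | (i <= k)%N) r i = 1 ->
  moderate_profile m k J ->
  psm_selects pi r astar ->
  distortion_le alpha pi J astar (lemma3_bound alpha k r).
Proof.
move=> alpha_gt0 alpha_le1 k_lt_m r_ge0 r_gt_k r_sum1 J_mod astar_sel.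
move=> d d_met d_cons b.
apply: le_trans (psm_cost_le alpha_gt0 alpha_le1 d_met d_cons b astar_sel) _.
have -> : lemma3_bound alpha k r * cost d b =
    cost d b + (lemma3_bound alpha k r - 1) * cost d b by ring.
rewrite lerD2l /cost mulr_sumr; apply: ler_sum => i _.
exact: (agent_bound alpha_gt0 alpha_le1 d_met d_cons k_lt_m J_mod
  r_ge0 r_gt_k r_sum1).
Qed.
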